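(* For all $a,b\in\mathbb{R}$ with $|a|,|b|\le2$, \[ (1+\cos a)(1+\cos b)\ge 2+2\cos\big(\sqrt{a^2+b^2}\big), \] with equality only for $a=0$ or $b=0$. *)

From Stdlib Require Import Reals.

(* Halving the angles, [1 + cos t = 2 cos (t/2)^2] turns the claim into
   [cos (sqrt (x^2 + y^2)) <= cos x * cos y] for [x = a/2], [y = b/2], all three
   cosines being positive.  For fixed [x > 0] the quotient
   [cos (sqrt (x^2 + c^2)) / cos c] equals [cos x] at [c = 0] and is strictly
   decreasing in [c], because its derivative has the sign of
   [tan c / c - tan r / r] with [r = sqrt (x^2 + c^2) > c], and [tan t / t] is
   increasing on [(0, PI/2)]. *)
From Stdlib Require Import Reals Lra.
From Coquelicot Require Import Coquelicot.
Open Scope R_scope.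

Lemma sin_mul_cos_lt t : 0 < t -> sin t * cos t < t.
Proof.
  intros Ht.
  assert (Hsin2 : sin (2 * t) < 2 * t) by (apply sin_lt_x; lra).
  rewrite sin_2a in Hsin2; lra.
Qed.

Lemma cos_pos_lt_PI2 t : 0 <= t < PI / 2 -> 0 < cos t.
Proof. intros Ht; apply cos_gt_0; pose proof PI_RGT_0; lra. Qed.

Lemma tan_div_id_lt y r : 0 < y -> y < r -> r < PI / 2 -> tan y / y < tan r / r.
Proof.
  intros Hy Hyr Hr; unfold tan.
  pose (q := fun t => sin t / cos t / t).
  pose (q' := fun t => (t - sin t * cos t) / (t * cos t) ^ 2).
  destruct (MVT_cor2 q q' y r Hyr) as [c [Hqc Hc]].
  { intros c Hc; apply is_derive_Reals.
    assert (0 < cos c) by (apply cos_pos_lt_PI2; lra).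
    unfold q, q'; auto_derive; [lra |].
    assert (Hpyth : sin c ^ 2 + cos c ^ 2 = 1)
      by (rewrite <- (sin2_cos2 c); unfold Rsqr; ring).
    transitivity ((c * (sin c ^ 2 + cos c ^ 2) - sin c * cos c) / (c * cos c) ^ 2);
      [field | rewrite Hpyth, Rmult_1_r]; lra. }
  assert (Hq'c : 0 < q' c).
  { assert (0 < cos c) by (apply cos_pos_lt_PI2; lra).
    pose proof (sin_mul_cos_lt c ltac:(lra)).
    apply Rdiv_lt_0_compat; [lra | apply pow_lt; nra]. }
  unfold q in Hqc; nra.
Qed.

Section CosHypotQuotient.

Variable x : R.
Hypothesis Hx : 0 < x.

Definition cos_hypot_quot c := cos (sqrt (x ^ 2 + c ^ 2)) / cos c.

Definition cos_hypot_quot' c :=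
  let r := sqrt (x ^ 2 + c ^ 2) in
  (cos r * sin c - sin r * (c / r) * cos c) / cos c ^ 2.

Lemma lt_sqrt_hypot c : 0 <= c -> c < sqrt (x ^ 2 + c ^ 2).
Proof.
  intros Hc; rewrite <- (sqrt_pow2 c) at 1 by lra.
  apply sqrt_lt_1_alt; nra.
Qed.

Lemma cos_hypot_quot_derive c :
  0 <= c -> sqrt (x ^ 2 + c ^ 2) < PI / 2 ->
  derivable_pt_lim cos_hypot_quot c (cos_hypot_quot' c).
Proof.
  intros Hc HrPI; apply is_derive_Reals.
  pose proof (lt_sqrt_hypot c Hc).
  assert (0 < cos c) by (apply cos_pos_lt_PI2; lra).
  unfold cos_hypot_quot, cos_hypot_quot'; auto_derive.
  - repeat split; [nra | lra].
  - replace (x * (x * 1) + c * (c * 1)) with (x ^ 2 + c ^ 2) by ring.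
    field; lra.
Qed.

Lemma cos_hypot_quot'_lt0 c :
  0 < c -> sqrt (x ^ 2 + c ^ 2) < PI / 2 -> cos_hypot_quot' c < 0.
Proof.
  intros Hc HrPI; pose proof (lt_sqrt_hypot c ltac:(lra)) as Hcr.
  unfold cos_hypot_quot'; set (r := sqrt (x ^ 2 + c ^ 2)) in *.
  assert (0 < cos c) by (apply cos_pos_lt_PI2; lra).
  assert (0 < cos r) by (apply cos_pos_lt_PI2; lra).
  pose proof (tan_div_id_lt c r Hc Hcr HrPI) as Htan; unfold tan in Htan.
  apply Rdiv_neg_pos; [| apply pow_lt; lra].
  assert (Hpos : 0 < c * cos c * cos r) by (repeat apply Rmult_lt_0_compat; lra).
  apply (Rmult_lt_compat_r _ _ _ Hpos) in Htan.
  replace (sin c / cos c / c * (c * cos c * cos r)) with (cos r * sin c)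
    in Htan by (field; lra).
  replace (sin r / cos r / r * (c * cos c * cos r)) with (sin r * (c / r) * cos c)
    in Htan by (field; lra).
  lra.
Qed.

Lemma cos_hypot_lt_mul_cos_pos y :
  0 < y -> sqrt (x ^ 2 + y ^ 2) < PI / 2 ->
  cos (sqrt (x ^ 2 + y ^ 2)) < cos x * cos y.
Proof.
  intros Hy Hxy.
  assert (HrPI : forall c, 0 <= c <= y -> sqrt (x ^ 2 + c ^ 2) < PI / 2).
  { intros c Hc; eapply Rle_lt_trans; [apply sqrt_le_1_alt | exact Hxy]; nra. }
  destruct (MVT_cor2 cos_hypot_quot cos_hypot_quot' 0 y Hy) as [c [Hhc Hc]].
  { intros c Hc; apply cos_hypot_quot_derive; [lra | apply HrPI; lra]. }
  pose proof (cos_hypot_quot'_lt0 c ltac:(lra) (HrPI c ltac:(lra))).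
  assert (Hh0 : cos_hypot_quot 0 = cos x).
  { unfold cos_hypot_quot; replace (x ^ 2 + 0 ^ 2) with (x ^ 2) by ring.
    rewrite sqrt_pow2, cos_0 by lra; field. }
  pose proof (lt_sqrt_hypot y ltac:(lra)).
  assert (Hcy : 0 < cos y) by (apply cos_pos_lt_PI2; lra).
  assert (Hhy : cos_hypot_quot y < cos x) by nra.
  unfold cos_hypot_quot in Hhy; apply (Rmult_lt_compat_r _ _ _ Hcy) in Hhy.
  unfold Rdiv in Hhy; rewrite Rmult_assoc, Rinv_l, Rmult_1_r in Hhy; lra.
Qed.

End CosHypotQuotient.

Lemma cos_Rabs t : cos (Rabs t) = cos t.
Proof. unfold Rabs; destruct (Rcase_abs t); [apply cos_neg | reflexivity]. Qed.

Lemma cos_hypot_lt_mul_cos x y :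
  x <> 0 -> y <> 0 -> sqrt (x ^ 2 + y ^ 2) < PI / 2 ->
  cos (sqrt (x ^ 2 + y ^ 2)) < cos x * cos y.
Proof.
  intros Hx Hy; rewrite <- (pow2_abs x), <- (pow2_abs y), <- (cos_Rabs x), <- (cos_Rabs y).
  apply cos_hypot_lt_mul_cos_pos; apply Rabs_pos_lt; assumption.
Qed.

Lemma cos_hypot_0l y : cos (sqrt (0 ^ 2 + y ^ 2)) = cos y.
Proof.
  replace (0 ^ 2 + y ^ 2) with (Rabs y ^ 2) by (rewrite pow2_abs; ring).
  rewrite sqrt_pow2 by apply Rabs_pos; apply cos_Rabs.
Qed.

Lemma cos_hypot_0r x : cos (sqrt (x ^ 2 + 0 ^ 2)) = cos x.
Proof. rewrite Rplus_comm; apply cos_hypot_0l. Qed.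

Lemma one_plus_cos t : 1 + cos t = 2 * cos (t / 2) ^ 2.
Proof. replace t with (2 * (t / 2)) at 1 by field; rewrite cos_2a_cos; ring. Qed.

Lemma sqrt_sum_sq_half a b : sqrt (a ^ 2 + b ^ 2) = 2 * sqrt ((a / 2) ^ 2 + (b / 2) ^ 2).
Proof.
  replace (a ^ 2 + b ^ 2) with (2 ^ 2 * ((a / 2) ^ 2 + (b / 2) ^ 2)) by field.
  rewrite sqrt_mult_alt, sqrt_pow2; lra.
Qed.

Lemma hypot_half_lt_PI2 a b :
  Rabs a <= 2 -> Rabs b <= 2 -> sqrt ((a / 2) ^ 2 + (b / 2) ^ 2) < PI / 2.
Proof.
  intros Ha Hb; apply (Rlt_trans _ (3 / 2)); [| exact PI2_3_2].
  rewrite <- (sqrt_pow2 (3 / 2)) by lra; apply sqrt_lt_1_alt.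
  pose proof (pow_maj_Rabs 2 a 2 Ha); pose proof (pow_maj_Rabs 2 b 2 Hb).
  split; nra.
Qed.

Theorem lemma3p3 (a b : R) (ha : Rabs a <= 2) (hb : Rabs b <= 2) :
  (1 + cos a) * (1 + cos b) >= 2 + 2 * cos (sqrt (a ^ 2 + b ^ 2)) /\
  ((1 + cos a) * (1 + cos b) = 2 + 2 * cos (sqrt (a ^ 2 + b ^ 2)) <->
   (a = 0 \/ b = 0)).
Proof.
  pose proof (hypot_half_lt_PI2 a b ha hb) as HrPI.
  rewrite (one_plus_cos a), (one_plus_cos b), sqrt_sum_sq_half, cos_2a_cos.
  set (x := a / 2) in *; set (y := b / 2) in *; set (r := sqrt (x ^ 2 + y ^ 2)) in *.
  assert (Hcr : 0 < cos r) by (apply cos_pos_lt_PI2; split; [apply sqrt_pos | exact HrPI]).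
  destruct (Req_dec a 0) as [Ha0 | Ha0]; [| destruct (Req_dec b 0) as [Hb0 | Hb0]].
  - assert (Hr : cos r = cos x * cos y).
    { unfold r, x; rewrite Ha0, Rdiv_0_l, cos_0, Rmult_1_l; apply cos_hypot_0l. }
    split; [| split; [auto | intros _]]; rewrite Hr; nra.
  - assert (Hr : cos r = cos x * cos y).
    { unfold r, y; rewrite Hb0, Rdiv_0_l, cos_0, Rmult_1_r; apply cos_hypot_0r. }
    split; [| split; [auto | intros _]]; rewrite Hr; nra.
  - assert (Hr : cos r < cos x * cos y)
      by (apply cos_hypot_lt_mul_cos; [unfold x | unfold y | exact HrPI]; lra).
    split; [nra | split; [intros; nra | intros [|]; contradiction]].
Qed.
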